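(* In the category of topological spaces, let $\{b\}\to\{a\searrow b\}$ be the inclusion of the closed point $b$ into the Sierpiński space. Then: (1) $\{\{b\}\to\{a\searrow b\}\}^l$ is exactly the class of continuous maps $f:A\to B$ with dense image $f(A)\subseteq B$; (2) $\{\{b\}\to\{a\searrow b\}\}^{lr}$ is exactly the class of closed embeddings, i.e. continuous maps $g:A\to X$ which are homeomorphisms onto a closed subset of $X$ equipped with the induced topology.
   Context: For morphisms $f:A\to B$ and $g:X\to Y$ in a category, write $f\rightthreetimes g$ (''$f$ has the left lifting property with respect to $g$'') if for all morphisms $i:A\to X$, $j:B\to Y$ with $g\circ i=j\circ f$ there exists a morphism $h:B\to X$ with $h\circ f=i$ and $g\circ h=j$. For a class $C$ of morphisms, $C^l=\{f:\ f\rightthreetimes g\text{ for all }g\in C\}$ and $C^r=\{g:\ f\rightthreetimes g\text{ for all }f\in C\}$; $C^{lr}=(C^l)^r$. $\{a\searrow b\}$ denotes the Sierpiński space on points $a,b$ with open sets $\emptyset,\{a\},\{a,b\}$ (so $a$ is open, $b$ is closed and $b\in\overline{\{a\}}$). *)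

From Stdlib Require Import Classical.

Set Implicit Arguments.

Record Top := MkTop {
  carrier :> Type;
  is_open : (carrier -> Prop) -> Prop;
  open_full : is_open (fun _ => True);
  open_inter : forall U V, is_open U -> is_open V -> is_open (fun x => U x /\ V x);
  open_union : forall (F : (carrier -> Prop) -> Prop),
      (forall U, F U -> is_open U) -> is_open (fun x => exists U, F U /\ U x)
}.

Arguments is_open {t} _.

Record cmap (A B : Top) := MkCmap {
  fn :> A -> B;
  fn_cont : forall V : B -> Prop, is_open V -> is_open (fun a => V (fn a))
}.

Definition llp {A B X Y : Top} (f : cmap A B) (g : cmap X Y) : Prop :=
  forall (i : cmap A X) (j : cmap B Y),
    (forall a, g (i a) = j (f a)) ->
    exists h : cmap B X, (forall a, h (f a) = i a) /\ (forall b, g (h b) = j b).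

Definition is_closed {X : Top} (C : X -> Prop) : Prop := is_open (fun x => ~ C x).
Definition closure {X : Top} (S : X -> Prop) : X -> Prop :=
  fun x => forall C : X -> Prop, is_closed C -> (forall y, S y -> C y) -> C x.
Definition range {A B : Type} (f : A -> B) : B -> Prop := fun b => exists a, f a = b.
Definition dense {X : Top} (S : X -> Prop) : Prop := forall x, closure S x.

(** Closed embedding: a continuous map that is a homeomorphism onto a closed
    subset of the codomain carrying the induced (subspace) topology:
    injective, closed image, and images of open sets are open in the
    subspace topology of the image. *)
Definition closed_embedding {A X : Top} (g : cmap A X) : Prop :=
  (forall a1 a2, g a1 = g a2 -> a1 = a2) /\
  is_closed (range g) /\
  (forall U : A -> Prop, is_open U ->
     exists V : X -> Prop, is_open V /\
       forall x, (exists a, U a /\ g a = x) <-> (V x /\ range g x)).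

Definition point_top : Top.
Proof.
  refine (@MkTop unit (fun _ => True) I _ _); intros; exact I.
Defined.

(** Sierpiński space {a ↘ b}: carrier bool with a := true, b := false;
    open sets ∅, {a}, {a,b}, i.e. exactly the U with (b ∈ U -> a ∈ U). *)
Definition sier_a : bool := true.
Definition sier_b : bool := false.

Definition sierpinski : Top.
Proof.
  refine (@MkTop bool (fun U => U sier_b -> U sier_a) _ _ _).
  - intros _; exact I.
  - intros U V HU HV [Ub Vb]; split; auto.
  - intros F HF [U [FU Ub]]; exists U; split; auto; apply (HF U FU Ub).
Defined.

Definition incl_b : cmap point_top sierpinski.
Proof.
  refine (@MkCmap point_top sierpinski (fun _ => sier_b) _).
  intros; exact I.
Defined.

From Stdlib Require Import Classical ClassicalEpsilon FunctionalExtensionality PropExtensionality.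

(* A continuous map to the Sierpinski space is the same thing as a closed set,
   namely the preimage of b, and a lift against {b} -> {a ↘ b} exists exactly
   when that closed set is the whole codomain.  So f lies in the left class iff
   every closed set containing f(A) is everything, i.e. f(A) is dense.

   For (2), a closed embedding g lifts against a dense f: j sends B into the
   closure of g(X), which is g(X), and the set-theoretic lift is continuous
   because X carries the topology induced by g.  Conversely, lifting g against
   three dense maps forces the three properties: collapsing two points to one
   gives injectivity; X into X with a point y of the closure of g(X) adjoined
   (neighbourhoods of y pulled back along g) gives y in g(X); the identity from
   X to X with the topology induced by g gives that g is an embedding. *)

Lemma open_ext {X : Top} (U V : X -> Prop) :
  (forall x, U x <-> V x) -> is_open U -> is_open V.
Proof.
  intros HUV HU.
  replace V with U; [exact HU|].
  apply functional_extensionality; intro x; apply propositional_extensionality; auto.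
Qed.

Lemma open_empty {X : Top} : is_open (fun _ : X => False).
Proof.
  apply open_ext with (fun x => exists U, (fun _ : X -> Prop => False) U /\ U x).
  - firstorder.
  - apply open_union; intros U [].
Qed.

Lemma open_const {X : Top} (P : Prop) : is_open (fun _ : X => P).
Proof.
  destruct (classic P) as [p | np].
  - apply open_ext with (fun _ => True); [firstorder | apply open_full].
  - apply open_ext with (fun _ => False); [firstorder | apply open_empty].
Qed.

Definition id_cmap (X : Top) : cmap X X := @MkCmap X X (fun x => x) (fun V HV => HV).

Definition const_cmap (A : Top) {B : Top} (b : B) : cmap A B :=
  @MkCmap A B (fun _ => b) (fun V _ => open_const (V b)).

Definition discrete_top (T : Type) : Top.
Proof.
  refine (@MkTop T (fun _ => True) I _ _); intros; exact I.
Defined.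

Definition discrete_cmap {T : Type} {B : Top} (h : T -> B) : cmap (discrete_top T) B :=
  @MkCmap (discrete_top T) B h (fun _ _ => I).

Lemma closure_subset_closed {X : Top} (S : X -> Prop) :
  (forall x, closure S x -> S x) -> is_closed S.
Proof.
  intros HS. unfold is_closed.
  apply open_ext with
    (fun x => exists O, (fun O => is_open O /\ forall z, S z -> ~ O z) O /\ O x).
  2: { apply open_union; intros O [HO _]; exact HO. }
  intro x; split.
  - intros [O [[_ HO] Ox]] Sx. exact (HO x Sx Ox).
  - intros nSx.
    assert (Hcl : ~ closure S x) by (intro Hcl; exact (nSx (HS x Hcl))).
    apply not_all_ex_not in Hcl as [C HC].
    apply imply_to_and in HC as [HCc HC].
    apply imply_to_and in HC as [HSC nCx].
    exists (fun z => ~ C z); repeat split; auto.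
Qed.

Lemma sier_preimage_b_closed {B : Top} (j : cmap B sierpinski) :
  is_closed (fun b => j b = sier_b).
Proof.
  unfold is_closed.
  apply open_ext with (fun b => j b = sier_a).
  - intro b; unfold sier_a, sier_b; destruct (j b); split; congruence.
  - apply (fn_cont j (fun s : sierpinski => s = sier_a)); cbn; auto.
Qed.

Definition sier_of_closed {B : Top} {C : B -> Prop} (HC : is_closed C) : cmap B sierpinski.
Proof.
  refine (@MkCmap B sierpinski
            (fun b => if excluded_middle_informative (C b) then sier_b else sier_a) _).
  intros V HV; cbn in HV.
  destruct (classic (V sier_b)) as [Vb | nVb].
  - apply open_ext with (fun _ => True); [| apply open_full].
    intro b; destruct (excluded_middle_informative (C b)); tauto.
  - apply open_ext with (fun b => V sier_a /\ ~ C b).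
    + intro b; destruct (excluded_middle_informative (C b)); tauto.
    + exact (open_inter _ _ _ (open_const _) HC).
Defined.

Lemma sier_of_closed_b {B : Top} {C : B -> Prop} (HC : is_closed C) (b : B) :
  sier_of_closed HC b = sier_b <-> C b.
Proof.
  cbn; destruct (excluded_middle_informative (C b)); unfold sier_a, sier_b;
    split; congruence || tauto.
Qed.

Lemma llp_incl_b_dense {A B : Top} (f : cmap A B) : llp f incl_b -> dense (range f).
Proof.
  intros Hllp b C HC Hrange.
  destruct (Hllp (const_cmap A (tt : point_top)) (sier_of_closed HC)) as [h [_ Hh]].
  - intro a. symmetry. apply sier_of_closed_b, Hrange. exists a; reflexivity.
  - apply (sier_of_closed_b HC). rewrite <- Hh. reflexivity.
Qed.

Lemma dense_llp_incl_b {A B : Top} (f : cmap A B) : dense (range f) -> llp f incl_b.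
Proof.
  intros D i j Hc. exists (const_cmap B (tt : point_top)). split.
  - intro a; destruct (i a); reflexivity.
  - intro b. symmetry. apply (D b _ (sier_preimage_b_closed j)).
    intros y [a <-]. rewrite <- Hc. reflexivity.
Qed.

Section AuxiliarySpaces.

Context {X Y : Top} (g : cmap X Y).

Definition adjoin_point (y : Y) : Top.
Proof.
  refine (@MkTop (option X)
    (fun U => is_open (fun x => U (Some x)) /\
       (U None -> exists V, is_open V /\ V y /\ forall x, V (g x) -> U (Some x))) _ _ _).
  - split; [apply open_full |].
    intros _; exists (fun _ => True); split; [apply open_full | auto].
  - intros U V [HU1 HU2] [HV1 HV2]. split; [exact (open_inter _ _ _ HU1 HV1) |].
    intros [Un Vn].
    destruct (HU2 Un) as [V1 [O1 [y1 H1]]], (HV2 Vn) as [V2 [O2 [y2 H2]]].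
    exists (fun z => V1 z /\ V2 z); split; [apply open_inter; auto |].
    split; [auto |]. intros x [? ?]; auto.
  - intros F HF. split.
    + apply open_ext with
        (fun x => exists W, (fun W => exists U, F U /\ forall x, W x <-> U (Some x)) W /\ W x).
      * intro x; split.
        -- intros [W [[U [FU HW]] Wx]]. exists U; split; auto; apply HW; auto.
        -- intros [U [FU Ux]]. exists (fun x => U (Some x)); split; auto.
           exists U; split; auto; tauto.
      * apply open_union. intros W [U [FU HW]].
        apply open_ext with (fun x => U (Some x)); [firstorder | apply (HF U FU)].
    + intros [U [FU Un]]. destruct (proj2 (HF U FU) Un) as [V [OV [Vy HV]]].
      exists V; repeat split; auto. intros x Vx; exists U; split; auto.
Defined.

Definition adjoin_point_incl (y : Y) : cmap X (adjoin_point y) :=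
  @MkCmap X (adjoin_point y) Some (fun V HV => proj1 HV).

Definition adjoin_point_ext (y : Y) : cmap (adjoin_point y) Y.
Proof.
  refine (@MkCmap (adjoin_point y) Y
            (fun o => match o with Some x => g x | None => y end) _).
  intros V HV. split.
  - exact (fn_cont g V HV).
  - intro Vy. exists V; repeat split; auto.
Defined.

Lemma adjoin_point_dense (y : Y) :
  closure (range g) y -> dense (range (adjoin_point_incl y)).
Proof.
  intros Hy [x |] C HC HS.
  - apply HS; exists x; reflexivity.
  - apply NNPP; intro nC.
    destruct (proj2 HC nC) as [V [OV [Vy HV]]].
    assert (HVc : is_closed (fun z => ~ V z)).
    { apply open_ext with V; [| exact OV]. intro z; split; [tauto | apply NNPP]. }
    apply (Hy _ HVc); auto.
    intros z [x <-] Vgx. apply (HV x Vgx), HS. exists x; reflexivity.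
Qed.

Definition induced_top : Top.
Proof.
  refine (@MkTop X (fun U => exists V, is_open V /\ forall x, U x <-> V (g x)) _ _ _).
  - exists (fun _ => True); split; [apply open_full | tauto].
  - intros U V [V1 [O1 H1]] [V2 [O2 H2]].
    exists (fun z => V1 z /\ V2 z); split; [apply open_inter; auto |].
    intro x; rewrite H1, H2; tauto.
  - intros F HF.
    exists (fun y => exists V,
               (fun V => is_open V /\ exists U, F U /\ forall x, U x <-> V (g x)) V /\ V y).
    split.
    + apply open_union. intros V [OV _]; exact OV.
    + intro x; split.
      * intros [U [FU Ux]]. destruct (HF U FU) as [V [OV HV]].
        exists V; split; [split; auto; exists U; auto | apply HV; auto].
      * intros [V [[OV [U [FU HU]]] Vx]]. exists U; split; auto; apply HU; auto.
Defined.

Definition induced_id : cmap X induced_top.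
Proof.
  refine (@MkCmap X induced_top (fun x => x) _).
  intros U [V [OV HV]].
  apply open_ext with (fun x => V (g x)); [firstorder | exact (fn_cont g V OV)].
Defined.

Definition induced_map : cmap induced_top Y.
Proof.
  refine (@MkCmap induced_top Y (fun x => g x) _).
  intros V HV. exists V; split; [exact HV | tauto].
Defined.

End AuxiliarySpaces.

Section RightLiftingDense.

Context {X Y : Top} {g : cmap X Y}.
Hypothesis g_lifts : forall (A B : Top) (f : cmap A B), dense (range f) -> llp f g.

Lemma lift_dense_injective : forall x1 x2, g x1 = g x2 -> x1 = x2.
Proof.
  intros x1 x2 E.
  destruct (g_lifts _ _ (discrete_cmap (fun _ : bool => (tt : point_top))))
    with (i := discrete_cmap (fun b : bool => if b then x1 else x2))
         (j := const_cmap point_top (g x1)) as [h [Hh _]].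
  - intros [] C _ HS. apply HS. exists true; reflexivity.
  - intros []; cbn; auto.
  - pose proof (Hh true) as H1; pose proof (Hh false) as H2; cbn in H1, H2.
    congruence.
Qed.

Lemma lift_dense_closed_range : is_closed (range g).
Proof.
  apply closure_subset_closed. intros y Hy.
  destruct (g_lifts _ _ (adjoin_point_incl g y))
    with (i := id_cmap X) (j := adjoin_point_ext g y) as [h [_ Hh]].
  - exact (adjoin_point_dense g y Hy).
  - intro a; reflexivity.
  - exists (h None). exact (Hh None).
Qed.

Lemma lift_dense_open_image (U : X -> Prop) : is_open U ->
  exists V : Y -> Prop, is_open V /\
    forall y, (exists a, U a /\ g a = y) <-> (V y /\ range g y).
Proof.
  intros HU.
  destruct (g_lifts _ _ (induced_id g)) with (i := id_cmap X) (j := induced_map g)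
    as [h [Hh _]].
  - intros x C _ HS. apply HS. exists x; reflexivity.
  - intro; reflexivity.
  - (* h is the identity, so continuity of h says U is open in the induced topology *)
    destruct (fn_cont h U HU) as [V [OV HV]]; cbn in Hh.
    exists V; split; [exact OV |]. intro y; split.
    + intros [a [Ua <-]]. split; [| exists a; reflexivity].
      apply HV. rewrite Hh. exact Ua.
    + intros [Vy [a <-]]. exists a; split; [| reflexivity].
      apply HV in Vy. rewrite Hh in Vy. exact Vy.
Qed.

End RightLiftingDense.

Lemma closed_embedding_llp_dense {A B X Y : Top} (f : cmap A B) (g : cmap X Y) :
  closed_embedding g -> dense (range f) -> llp f g.
Proof.
  intros [Inj [Cl Emb]] D i j Hc.
  assert (Hr : forall b, range g (j b)).
  { intro b. apply (D b (fun b => range g (j b))).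
    - exact (fn_cont j _ Cl).
    - intros y [a <-]. exists (i a). apply Hc. }
  set (h := fun b => proj1_sig (constructive_indefinite_description _ (Hr b))).
  assert (Hh : forall b, g (h b) = j b).
  { intro b. exact (proj2_sig (constructive_indefinite_description _ (Hr b))). }
  assert (Hcont : forall U : X -> Prop, is_open U -> is_open (fun b => U (h b))).
  { intros U HU. destruct (Emb U HU) as [V [OV HV]].
    apply open_ext with (fun b => V (j b)); [| exact (fn_cont j V OV)].
    intro b; split.
    - intro Vj. destruct (proj2 (HV (j b)) (conj Vj (Hr b))) as [a [Ua Ea]].
      rewrite <- Hh in Ea. apply Inj in Ea. subst; exact Ua.
    - intro Uh. apply (HV (j b)). exists (h b); auto. }
  exists (@MkCmap B X h Hcont). split.
  - intro a; cbn. apply Inj. rewrite Hh. symmetry; apply Hc.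
  - intro b; cbn; apply Hh.
Qed.

Theorem claim2 :
  (* (1) {b -> {a ↘ b}}^l = continuous maps with dense image *)
  (forall (A B : Top) (f : cmap A B), llp f incl_b <-> dense (range f)) /\
  (* (2) {b -> {a ↘ b}}^{lr} = closed embeddings *)
  (forall (X Y : Top) (g : cmap X Y),
     (forall (A B : Top) (f : cmap A B), llp f incl_b -> llp f g)
     <-> closed_embedding g).
Proof.
  split.
  - intros A B f; split; [apply llp_incl_b_dense | apply dense_llp_incl_b].
  - intros X Y g; split.
    + intros Hg.
      assert (g_lifts : forall (A B : Top) (f : cmap A B), dense (range f) -> llp f g)
        by (intros A B f D; apply Hg, dense_llp_incl_b, D).
      split; [| split].
      * exact (lift_dense_injective g_lifts).
      * exact (lift_dense_closed_range g_lifts).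
      * exact (lift_dense_open_image g_lifts).
    + intros Hemb A B f Hf.
      exact (closed_embedding_llp_dense f g Hemb (llp_incl_b_dense f Hf)).
Qed.
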